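(* Let $G=(N,T,F,P,S)$ be a grounded indexed grammar, $D$ a derivation tree of $G$ (with some set of marked positions of its yield), and let $R$ be the set of $3$-tuples $(\tau_1,\tau_2,\tau_3)$ of pairwise disjoint subsets of $N$ with union $N$. For every $W\subseteq N\times N\times R$, every limited controlled descent in $D$ which respects $W$ has at most $(|N|\cdot 3^{|N|})^{|W|+1}$ splits.
   Context: An indexed grammar $G=(N,T,F,P,S)$ has finite alphabets $N$ (nonterminals), $T$ (terminals), $F$ (stack symbols), start symbol $S$, and productions of the forms $A\to r$, $A\to Bf$, $Af\to r$ ($A,B\in N$, $f\in F$, $r\in(N\cup T)^*$); nonterminals carry stacks $x\in F^*$ (written $Ax$, top first); applying $A\to r$ to $Ax$ gives $r$ with each nonterminal $C$ replaced by $Cx$; $A\to Bf$ turns $Ax$ into $Bfx$; $Af\to r$ turns $Afy$ into $r$ with each nonterminal $C$ replaced by $Cy$. $G$ is grounded if there is $\$\in F$ such that all productions have the forms $S\to A\$$, $A\to r$, $A\to Bf$, $Af\to r$, $A\$\to s$ with $A,B\in N\setminus\{S\}$, $f\in F\setminus\{\$\}$, $r\in(N\setminus\{S\})^+$, $s\in T^*$. A derivation tree is an ordered tree with root labelled $S$ (empty stack), internal nodes labelled in $NF^*$, leaves labelled in $T^*$, where the children of each internal node are obtained from its label by one production (a production $A\$\to s'$ yields a single leaf labelled $s'$); its yield is the concatenation of leaf labels. Marking: a leaf is marked if its label contains a marked position of the yield; an internal node is marked if it has a marked descendant; a branch node is a node with more than one marked child. For an internal node $v$ labelled $Ax$: $\sigma(v)=A$,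 $\eta(v)=|x|$; $v'$ is in the scope of $v$ iff $v'$ is internal and there is a downward path from $v$ to $v'$ all of whose nodes $v''$ (including $v'$) satisfy $\eta(v'')\ge \eta(v)$; $\beta(v)$ is the set of nodes in the scope of $v$ none of whose children is in the scope of $v$; $\tau(v)=(\tau_1,\tau_2,\tau_3)\in R$ with $\tau_1=\{A:\sigma(v')\ne A\ \forall v'\in\beta(v)\}$, $\tau_2=\{A:\exists v'\in\beta(v),\sigma(v')=A$, and no marked $v'\in\beta(v)$ has $\sigma(v')=A\}$, $\tau_3=\{A:\exists$ marked $v'\in\beta(v)$ with $\sigma(v')=A\}$. A descent is a list of internal nodes $H=(v_0,\dots,v_m)$, $m\ge0$, with $v_m\in\beta(v_0)$ and each $v_i$ ($i\ge1$) a (not necessarily immediate) descendant of $v_{i-1}$; it is controlled if each $v_i$ ($i\ge 1$) is a child of $v_{i-1}$. For $0\le i<m$ there is a split between $i$ and $i+1$ iff some node on the tree path from $v_i$ (inclusive) to $v_{i+1}$ (exclusive) is a branch node; the number of splits of $H$ is the number of such $i$. $H$ is limited iff for all $0\le b_1<t_1<t_2\le b_2\le m$ with $\sigma(v_{b_1})=\sigma(v_{t_1})$, $\sigma(v_{t_2})=\sigma(v_{b_2})$, $v_{b_2}\in\beta(v_{b_1})$, $v_{t_2}\in\beta(v_{t_1})$ and $\tau(v_{b_1})=\tau(v_{t_1})$, there is no split between $i$ and $i+1$ for any $b_1\le i<t_1$ or $t_2\le i<b_2$. $H$ respects $W$ iff for all $0\le i<j\le m$ with $v_j\in\beta(v_i)$,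 the triple $(\sigma(v_i),\sigma(v_j),\tau(v_i))$ lies in $W$. *)

From mathcomp Require Import all_boot all_order.
From mathcomp Require Import boolp.
Set Implicit Arguments. Unset Strict Implicit. Unset Printing Implicit Defensive.

(*   rules : productions  A -> r      (r in (N u T)^* )                *)
(*   push  : productions  A -> B f                                     *)
(*   pop   : productions  A f -> r    (r in (N u T)^* )                *)
Record igrammar (N T F : finType) := IGrammar {
  start : N;
  rules : seq (N * seq (N + T));
  push  : seq (N * N * F);
  pop   : seq (N * F * seq (N + T))
}.

Section IndexedGrammars.
Context {N T F : finType}.
Implicit Type G : igrammar N T F.

Definition is_nt_not (S : N) (z : N + T) : bool :=
  if z is inl C then C != S else false.
Definition is_term (z : N + T) : bool := if z is inr _ then true else false.

Definition grounded_by G (dollar : F) : Prop :=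
  let S := start G in
  [/\ all (fun ar => (ar.1 != S) && (ar.2 != [::]) && all (is_nt_not S) ar.2)
          (rules G),
      all (fun abf => let: (A, B, f) := abf in
             ((A == S) && (f == dollar) && (B != S))
          || ((A != S) && (B != S) && (f != dollar))) (push G) &
      all (fun afr => let: (A, f, r) := afr in
             (A != S) &&
             (((f != dollar) && (r != [::]) && all (is_nt_not S) r)
              || ((f == dollar) && all is_term r))) (pop G)].

Definition grounded G : Prop := exists dollar : F, grounded_by G dollar.

(* Derivation trees.  Internal nodes carry a label A x (A in N, x in   *)
(* F^*, top of stack first); leaves carry a label in T^*.               *)
Inductive dtree : Type :=
  | Leaf of seq T
  | Node of N & seq F & seq dtree.

Definition label (t : dtree) : (N * seq F) + seq T :=
  match t with Leaf s => inr s | Node A x _ => inl (A, x) end.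

Definition terms_of (r : seq (N + T)) : seq T :=
  pmap (fun z => if z is inr a then Some a else None) r.

(* A right-hand side consisting only of terminals (e.g. the
   production A$ -> s) yields a single leaf labelled by it; otherwise each
   nonterminal C gives a child C y (and a terminal a a leaf labelled a,
   which never happens in grounded grammars). *)
Definition expand (y : seq F) (r : seq (N + T)) : seq ((N * seq F) + seq T) :=
  if all is_term r then [:: inr (terms_of r)]
  else map (fun z => match z with inl C => inl (C, y) | inr a => inr [:: a] end) r.

Definition step G (A : N) (x : seq F) (cs : seq ((N * seq F) + seq T)) : Prop :=
  (exists r, (A, r) \in rules G /\ cs = expand x r)
  \/ (exists B f, (A, B, f) \in push G /\ cs = [:: inl (B, f :: x)])
  \/ (exists f y r, x = f :: y /\ (A, f, r) \in pop G /\ cs = expand y r).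

(* nodes are addressed by the sequence of child indices from the root *)
Fixpoint subt (t : dtree) (p : seq nat) : option dtree :=
  match p with
  | [::] => Some t
  | i :: p' =>
      match t with
      | Leaf _ => None
      | Node _ _ ch => if i < size ch then subt (nth t ch i) p' else None
      end
  end.

Definition is_internal (t : dtree) (p : seq nat) : Prop :=
  exists A x ch, subt t p = Some (Node A x ch).

Definition derivation_tree G (t : dtree) : Prop :=
  label t = inl (start G, [::]) /\
  forall p A x ch, subt t p = Some (Node A x ch) -> step G A x (map label ch).

Fixpoint ylen (t : dtree) : nat :=
  match t with
  | Leaf s => size s
  | Node _ _ ch => sumn (map ylen ch)
  end.

Fixpoint offset (t : dtree) (p : seq nat) : nat :=
  match p with
  | [::] => 0
  | i :: p' =>
      match t with
      | Leaf _ => 0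
      | Node _ _ ch => sumn (map ylen (take i ch)) + offset (nth t ch i) p'
      end
  end.

Definition leaf_marked (t : dtree) (M : nat -> Prop) (p : seq nat) : Prop :=
  exists s, subt t p = Some (Leaf s) /\
    exists k, k < size s /\ M (offset t p + k).

Definition marked (t : dtree) (M : nat -> Prop) (p : seq nat) : Prop :=
  exists q, leaf_marked t M (p ++ q).

Definition branch_node (t : dtree) (M : nat -> Prop) (p : seq nat) : Prop :=
  exists i j, i <> j /\ marked t M (rcons p i) /\ marked t M (rcons p j).

(* sigma and eta (meaningful on internal nodes) *)
Definition sigma G (t : dtree) (p : seq nat) : N :=
  if subt t p is Some (Node A _ _) then A else start G.
Definition eta (t : dtree) (p : seq nat) : nat :=
  if subt t p is Some (Node _ x _) then size x else 0.

Definition in_scope (t : dtree) (v v' : seq nat) : Prop :=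
  exists q, v' = v ++ q /\
    forall k, k <= size q ->
      is_internal t (v ++ take k q) /\ eta t v <= eta t (v ++ take k q).

Definition in_beta (t : dtree) (v v' : seq nat) : Prop :=
  in_scope t v v' /\ forall i, ~ in_scope t v (rcons v' i).

Definition triple := ({set N} * {set N} * {set N})%type.
Definition inR (tau : triple) : bool :=
  [&& tau.1.1 :&: tau.1.2 == set0, tau.1.1 :&: tau.2 == set0,
      tau.1.2 :&: tau.2 == set0 & tau.1.1 :|: tau.1.2 :|: tau.2 == setT].

Definition tau G (t : dtree) (M : nat -> Prop) (v : seq nat) : triple :=
  ( [set A : N | `[< forall v', in_beta t v v' -> sigma G t v' != A >] ],
    [set A : N | `[< (exists v', in_beta t v v' /\ sigma G t v' = A) /\
                     ~ (exists v', in_beta t v v' /\ marked t M v' /\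
                                   sigma G t v' = A) >] ],
    [set A : N | `[< exists v', in_beta t v v' /\ marked t M v' /\
                               sigma G t v' = A >] ] ).

(* Descents H = (v_0, ..., v_m), given as a nonempty list of addresses *)
Definition vH (H : seq (seq nat)) (i : nat) : seq nat := nth [::] H i.
Definition mH (H : seq (seq nat)) : nat := (size H).-1.

Definition descendant (v w : seq nat) : Prop := exists q, q != [::] /\ w = v ++ q.
Definition child (v w : seq nat) : Prop := exists i, w = rcons v i.

Definition descent (t : dtree) (H : seq (seq nat)) : Prop :=
  [/\ 0 < size H,
      forall i, i <= mH H -> is_internal t (vH H i),
      in_beta t (vH H 0) (vH H (mH H)) &
      forall i, 1 <= i <= mH H -> descendant (vH H i.-1) (vH H i)].

Definition controlled (H : seq (seq nat)) : Prop :=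
  forall i, 1 <= i <= mH H -> child (vH H i.-1) (vH H i).

(* split between i and i+1 *)
Definition split_at (t : dtree) (M : nat -> Prop) (H : seq (seq nat)) (i : nat) : Prop :=
  exists q, vH H i.+1 = vH H i ++ q /\
    exists k, k < size q /\ branch_node t M (vH H i ++ take k q).

Definition nsplits (t : dtree) (M : nat -> Prop) (H : seq (seq nat)) : nat :=
  count (fun i => `[< split_at t M H i >]) (iota 0 (mH H)).

Definition limited G (t : dtree) (M : nat -> Prop) (H : seq (seq nat)) : Prop :=
  forall b1 t1 t2 b2, b1 < t1 -> t1 < t2 -> t2 <= b2 -> b2 <= mH H ->
    sigma G t (vH H b1) = sigma G t (vH H t1) ->
    sigma G t (vH H t2) = sigma G t (vH H b2) ->
    in_beta t (vH H b1) (vH H b2) ->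
    in_beta t (vH H t1) (vH H t2) ->
    tau G t M (vH H b1) = tau G t M (vH H t1) ->
    forall i, (b1 <= i < t1) || (t2 <= i < b2) -> ~ split_at t M H i.

Definition respects G (t : dtree) (M : nat -> Prop) (H : seq (seq nat))
    (W : {set N * N * triple}) : Prop :=
  forall i j, i < j -> j <= mH H -> in_beta t (vH H i) (vH H j) ->
    (sigma G t (vH H i), sigma G t (vH H j), tau G t M (vH H i)) \in W.

End IndexedGrammars.

From mathcomp Require Import all_boot all_order boolp.
From mathcomp Require Import zify.
Set Implicit Arguments. Unset Strict Implicit. Unset Printing Implicit Defensive.

(* Along a controlled descent the stack height grows by at most one per step, and a
   push step has a single child, so it never splits.  Call (i, j) matched when
   v_j is in beta(v_i).  Given a matched pair (a, b), take the innermost matched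
   pair (t1, t2) carrying the same triple (sigma, sigma, tau); by limitedness nothing
   outside it splits.  Inside, the path keeps returning to the stack height of t1;
   two returns with the same class (sigma, tau) enclose no split, and there are at
   most |N| 3^|N| classes.  Between consecutive returns the path pushes once and then
   runs through a matched pair strictly inside (t1, t2), which carries fewer
   triples.  Induction on the number of triples gives the bound. *)

(* Positions 0..m of a controlled descent: [e k] is the stack height of v_k, [br k]
   says v_k is a branch node, [below j b] says that all internal children of v_j
   have stack height < b, [sg] and [tu] are sigma and tau along the path. *)
Section LimitedSequences.
Variables (m : nat) (e : nat -> nat) (br : nat -> bool) (below : nat -> nat -> Prop).
Hypothesis e_succ : forall k, k < m -> e k.+1 <= (e k).+1.
Hypothesis push_no_branch : forall k, k < m -> e k.+1 = (e k).+1 -> ~~ br k.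
Hypothesis below_mono : forall j b b', b <= b' -> below j b -> below j b'.
Hypothesis below_succ : forall j b, j < m -> below j b <-> e j.+1 < b.

Definition matched i j :=
  [/\ i <= j, j <= m, forall k, i <= k <= j -> e i <= e k & below j (e i)].

Definition splits a b := count br (iota a (b - a)).

Lemma splitsD a c b : a <= c <= b -> splits a b = splits a c + splits c b.
Proof.
move=> /andP[ac cb]; rewrite /splits -count_cat -{2}(subnKC ac) -iotaD.
by congr (count _ (iota _ _)); lia.
Qed.

Lemma splits_le a b : splits a b <= b - a.
Proof. by rewrite /splits -[leqRHS](size_iota a) count_size. Qed.

Lemma splits_eq0 a b : (forall i, a <= i < b -> ~~ br i) -> splits a b = 0.
Proof.
move=> no_br; apply/eqP; rewrite -leqn0 leqNgt -has_count.
by apply/hasP => -[i]; rewrite mem_iota => ai; apply/negP/no_br; lia.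
Qed.

Lemma matched_uniq i j j' : matched i j -> matched i j' -> j = j'.
Proof.
wlog jj' : j j' / j <= j' => [sym|[ij jm _ bj] [_ j'm ge_i _]].
  by move=> mj mj'; case: (leqP j j') => [|/ltnW] /sym; [apply | move=> /(_ mj' mj)].
apply/eqP; rewrite eqn_leq jj' leqNgt; apply/negP => jj'_lt.
have := ge_i j.+1; have /below_succ := bj; lia.
Qed.

Lemma matched_level i j l : matched i j -> i <= l <= j -> e l = e i -> matched l j.
Proof.
case=> ij jm ge_i bj /andP[il lj] eli; rewrite /matched eli.
by split=> // k /andP[lk kj]; apply: ge_i; lia.
Qed.

Variables (X Y : finType) (sg : nat -> X) (tu : nat -> Y) (W : {set X * X * Y}).

Definition trip i j := (sg i, sg j, tu i).

Hypothesis limited : forall b1 t1 t2 b2, b1 < t1 -> t1 < t2 -> t2 <= b2 ->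
  matched b1 b2 -> matched t1 t2 -> trip b1 b2 = trip t1 t2 ->
  forall i, (b1 <= i < t1) || (t2 <= i < b2) -> ~~ br i.
Hypothesis respects : forall i j, i < j -> matched i j -> trip i j \in W.

Variables (A : {set X * Y}) (K : nat).
Hypothesis W_A : forall w, w \in W -> (w.1.1, w.2) \in A.
Hypothesis card_A : #|A| <= K.
Hypothesis K_gt1 : 1 < K.

Section Excursions.
Variables (t1 t2 B : nat).
Hypothesis matched12 : matched t1 t2.
Hypothesis inner : forall c d, t1 < c -> d <= t2 -> matched c d -> splits c d <= B.

(* The step out of a return [l] to level [e t1] is a push, hence not a split; the
   rest of the excursion up to the next return [n] is a matched pair inside. *)
Lemma splits_excursion l n : t1 <= l < n -> n <= t2 -> e l = e t1 ->
  (forall k, l < k < n -> e t1 < e k) -> e n = e t1 \/ n = t2 ->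
  splits l n <= B.+1.
Proof.
move=> /andP[t1l ln] nt2 el above reach; have [t1t2 t2m ge_t1 below_t2] := matched12.
have [|far] := leqP n l.+1; first by have := splits_le l n; lia.
have push : e l.+1 = (e l).+1 by have := e_succ (k := l); have := above l.+1; lia.
rewrite (splitsD (c := l.+1)); last lia.
rewrite (splits_eq0 (a := l)) ?add0n => [|i /andP[li il]]; last first.
  have -> : i = l by lia.
  by apply: push_no_branch => //; lia.
have [en|ne] := eqVneq (e n) (e t1).
  rewrite (splitsD (c := n.-1)); last lia.
  suff : splits l.+1 n.-1 <= B by have := splits_le n.-1 n; lia.
  apply: inner; [lia | lia | split; [lia | lia | | ]].
    by move=> k /andP[lk kn]; have := above k; lia.
  by apply/below_succ; [lia | rewrite prednK; lia].
have n_t2 : n = t2 by case: reach => // /eqP; rewrite (negbTE ne).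
suff : splits l.+1 n <= B by lia.
apply: inner; [lia | lia | split; [lia | lia | | ]].
  move=> k /andP[lk kn]; have [|kt2] := ltnP k n; first by have := above k; lia.
  have -> : k = n by lia.
  by have := ge_t1 n; move: ne => /eqP; lia.
by rewrite n_t2; apply: below_mono below_t2; lia.
Qed.

Definition level_classes l : {set X * Y} :=
  [set c | `[< exists i, [/\ l <= i < t2, e i = e t1 & (sg i, tu i) = c] >]].

Lemma level_classesS l l' : l <= l' -> level_classes l' \subset level_classes l.
Proof.
move=> ll'; apply/subsetP => c; rewrite !inE => /asboolP[i [/andP[li it2] ei ci]].
by apply/asboolP; exists i; split=> //; lia.
Qed.

Lemma splits_levels l : t1 <= l < t2 -> e l = e t1 ->
  splits l t2 <= #|level_classes l| * B.+1.
Proof.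
have [d] := ubnP (t2 - l); elim: d l => // d IH l ltd /andP[t1l lt2] el.
have [t1t2 t2m ge_t1 _] := matched12.
have cl : (sg l, tu l) \in level_classes l.
  by rewrite inE; apply/asboolP; exists l; split=> //; lia.
have cl_pos : 0 < #|level_classes l| by apply/card_gt0P; exists (sg l, tu l).
have [[i [/andP[li it2] ei ci]] | fresh] :=
  pselect (exists i, [/\ l < i < t2, e i = e t1 & (sg i, tu i) = (sg l, tu l)]).
  (* the class of [l] recurs at [i], so by limitedness nothing splits in between *)
  rewrite (splitsD (c := i)); last lia.
  rewrite (splits_eq0 (a := l)) ?add0n => [|k /andP[lk ki]]; last first.
    apply: (limited (b1 := l) (t1 := i) (t2 := t2) (b2 := t2)) => //.
    - by apply: matched_level matched12 _ _ => //; lia.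
    - by apply: matched_level matched12 _ _ => //; lia.
    - by rewrite /trip; case: ci => -> ->.
    - by rewrite lk ki.
  apply: leq_trans (IH i _ _ ei) _; [lia | lia |].
  by rewrite leq_mul2r subset_leq_card ?orbT // level_classesS //; lia.
have next : exists n, (l < n <= t2) && ((e n == e t1) || (n == t2)).
  by exists t2; rewrite lt2 leqnn eqxx orbT.
case: (ex_minnP next) => n /andP[/andP[ln nt2] reach] first_return.
have exc : splits l n <= B.+1.
  apply: splits_excursion => //; [lia | | by case/orP: reach => /eqP; [left | right]].
  move=> k /andP[lk kn]; rewrite ltn_neqAle ge_t1 ?andbT; last lia.
  by apply/eqP => ek; have := first_return k; rewrite ek eqxx lk /=; lia.
have [<- | nt2'] := eqVneq n t2.
  by apply: leq_trans exc _; rewrite leq_pmull.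
have {reach} en : e n = e t1 by apply/eqP; move: reach; rewrite (negbTE nt2') orbF.
have fewer : #|level_classes n| < #|level_classes l|.
  apply/proper_card/properP; split; first by apply: level_classesS; lia.
  exists (sg l, tu l) => //; rewrite inE; apply/asboolP => -[i [/andP[ni it2] ei ci]].
  by apply: fresh; exists i; split=> //; lia.
rewrite (splitsD (c := n)); last lia.
have IHn : splits n t2 <= #|level_classes n| * B.+1 by apply: IH en; lia.
by apply: leq_trans (leq_add exc IHn) _; rewrite -mulSn leq_mul2r fewer orbT.
Qed.

Lemma card_level_classes : #|level_classes t1| <= K.
Proof.
apply: leq_trans card_A; apply/subset_leq_card/subsetP => c.
rewrite inE => /asboolP[i [/andP[t1i it2] ei <-]].
apply: (W_A (respects it2 _)); apply: matched_level matched12 _ ei; lia.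
Qed.

Lemma splits_matched_inner : splits t1 t2 <= K * B.+1.
Proof.
have [lt12|] := ltnP t1 t2; last by have := splits_le t1 t2; lia.
apply: leq_trans (splits_levels _ erefl) _; first lia.
by rewrite leq_mul2r card_level_classes orbT.
Qed.
End Excursions.

Definition inner_trips a b : {set X * X * Y} :=
  [set w | `[< exists i j, [/\ a <= i, i < j, j <= b, matched i j & trip i j = w] >]].

Lemma innermost_same_trip a b : a < b -> matched a b ->
  exists t1 t2, [/\ t1 < t2, matched t1 t2, splits a b = splits t1 t2 &
    forall c d, t1 < c -> d <= t2 -> matched c d ->
      inner_trips c d \subset inner_trips a b :\ trip a b].
Proof.
move=> ab mab; pose P i := (a <= i) &&
  `[< exists j, [/\ i < j, j <= b, matched i j & trip i j = trip a b] >].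
have exP : exists i, P i by exists a; rewrite /P leqnn; apply/asboolP; exists b.
have ubP i : P i -> i <= b by case/andP=> _ /asboolP[j [ij jb _ _]]; lia.
case: (ex_maxnP exP ubP) => t1 /andP[at1 /asboolP[t2 [t12 t2b mt12 same]]] last_copy.
exists t1, t2; split=> //.
  have [at1'|] := ltnP a t1; last first.
    move=> t1a; have ta : t1 = a by lia.
    by subst t1; rewrite (matched_uniq mt12 mab).
  have no_br := limited at1' t12 t2b mab mt12 (esym same).
  have out1 : splits a t1 = 0 by apply: splits_eq0 => i ir; apply: no_br; rewrite ir.
  have out2 : splits t2 b = 0 by apply: splits_eq0 => i ir; apply: no_br; rewrite ir orbT.
  rewrite (splitsD (c := t1)) ?out1; last lia.
  by rewrite (splitsD (a := t1) (c := t2)) ?out2 ?addn0 //; lia.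
move=> c d t1c dt2 mcd; apply/subsetP => w; rewrite !inE.
case/asboolP=> i [j [ci ij jd mij <-]]; apply/andP; split; last first.
  by apply/asboolP; exists i, j; split=> //; lia.
apply/eqP => copy; suff : i <= t1 by lia.
apply: last_copy; rewrite /P; apply/andP; split; first lia.
by apply/asboolP; exists j; split=> //; lia.
Qed.

Lemma inner_trips_self a b : a < b -> matched a b -> trip a b \in inner_trips a b.
Proof. by move=> ab mab; rewrite inE; apply/asboolP; exists a, b; split. Qed.

(* The slack [K] closes the induction: [K * (K ^ n.+1 - K).+1 + K <= K ^ n.+2] as [1 < K]. *)
Lemma splits_matched_bound n a b : matched a b -> #|inner_trips a b| <= n ->
  splits a b + K <= K ^ n.+1.
Proof.
have K_exp k : K <= K ^ k.+1 by rewrite -{1}(expn1 K) leq_pexp2l //; lia.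
elim: n a b => [|n IH] a b mab card_ab.
  have [ab|] := ltnP a b; last by have := splits_le a b; rewrite expn1; lia.
  by move: card_ab; rewrite (cardsD1 (trip a b)) inner_trips_self.
have [ab|] := ltnP a b; last by have := splits_le a b; have := K_exp n.+1; lia.
have [t1 [t2 [t12 mt12 -> fewer]]] := innermost_same_trip ab mab.
suff : splits t1 t2 <= K * (K ^ n.+1 - K).+1.
  rewrite [K ^ n.+2]expnS -(subnK (K_exp n)); move: (K ^ n.+1 - K) => B; nia.
apply: (splits_matched_inner mt12) => c d t1c dt2 mcd.
suff : splits c d + K <= K ^ n.+1 by lia.
apply: (IH _ _ mcd); apply: leq_trans (subset_leq_card (fewer c d t1c dt2 mcd)) _.
by move: card_ab; rewrite (cardsD1 (trip a b)) inner_trips_self.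
Qed.

Theorem splits_limited_bound a b : matched a b -> splits a b <= K ^ (#|W| + 1).
Proof.
move=> mab; suff : splits a b + K <= K ^ (#|W|).+1 by rewrite addn1; lia.
apply: splits_matched_bound mab _; apply/subset_leq_card/subsetP => w.
by rewrite inE => /asboolP[i [j [_ ij _ mij <-]]]; apply: respects.
Qed.
End LimitedSequences.

Section DerivationTrees.
Context {N T F : finType}.
Implicit Types (t : @dtree N T F) (G : igrammar N T F).

Lemma subt_cat t p q : subt t (p ++ q) = obind (subt^~ q) (subt t p).
Proof. by elim: p t => [|i p IH] [s|A x ch] //=; case: ifP. Qed.

Lemma subt_rcons t p i : subt t (rcons p i) =
  if subt t p is Some (Node _ _ ch) then
    (if i < size ch then Some (nth (Leaf [::]) ch i) else None)
  else None.
Proof.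
rewrite -cats1 subt_cat; case: (subt t p) => [[s|A x ch]|] //=.
by case: ifP => // lt; rewrite (set_nth_default (Leaf [::])).
Qed.

Lemma expand_stack (y : seq F) (r : seq (N + T)) C z : inl (C, z) \in expand y r -> z = y.
Proof.
rewrite /expand; case: ifP => _; first by rewrite mem_seq1.
by case/mapP => [[c|a]] _ // [_ ->].
Qed.

Lemma step_children_stack G A x cs : step G A x cs ->
  exists y : seq F, (forall B z, inl (B, z) \in cs -> z = y) /\
    (size y <= size x \/ (size y = (size x).+1 /\ size cs = 1)).
Proof.
case=> [[r [_ ->]] | [[B [f [_ ->]]] | [f [y [r [-> [_ ->]]]]]]].
- by exists x; split; [move=> B z /expand_stack | left].
- by exists (f :: x); split; [move=> B' z; rewrite mem_seq1 => /eqP[_ ->] | right].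
- by exists y; split; [move=> B z /expand_stack | left].
Qed.

Definition children_below t p b :=
  forall i, is_internal t (rcons p i) -> eta t (rcons p i) < b.

Lemma children_below_mono t p b b' :
  b <= b' -> children_below t p b -> children_below t p b'.
Proof. by move=> bb' below_b i /below_b /leq_trans; apply. Qed.

Lemma children_eta G t p A x ch : derivation_tree G t -> subt t p = Some (Node A x ch) ->
  exists h, (forall i, is_internal t (rcons p i) -> eta t (rcons p i) = h) /\
    (h <= size x \/ (h = (size x).+1 /\ size ch = 1)).
Proof.
move=> [_ tstep] tp; have [y [same sizes]] := step_children_stack (tstep _ _ _ _ tp).
exists (size y); split; last by rewrite size_map in sizes.
move=> i [B [z [ch' ti]]]; rewrite /eta ti; congr size; apply: (same B).
move: ti; rewrite subt_rcons tp; case: ifP => // lt [chi].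
have <- : label (nth (Leaf [::]) ch i) = inl (B, z) by rewrite chi.
by rewrite -(nth_map _ (inr [::])) // mem_nth ?size_map.
Qed.

Lemma branch_node_size t M p A x ch :
  branch_node t M p -> subt t p = Some (Node A x ch) -> 1 < size ch.
Proof.
move=> [i [j [ij [mi mj]]]] tp.
have lt k : marked t M (rcons p k) -> k < size ch.
  by case=> q [s [+ _]]; rewrite subt_cat subt_rcons tp; case: ifP.
by have := lt i mi; have := lt j mj; lia.
Qed.

Lemma in_scope_rcons t v w i : in_scope t v w ->
  in_scope t v (rcons w i) <-> is_internal t (rcons w i) /\ eta t v <= eta t (rcons w i).
Proof.
case=> q [-> scope_q]; split.
  by case=> q' [E scope_q']; have := scope_q' (size q') (leqnn _); rewrite take_size -E.
case=> int_i eta_i; exists (rcons q i); split; first by rewrite rcons_cat.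
move=> k; rewrite size_rcons leq_eqVlt ltnS => /orP[/eqP -> | lt].
  by rewrite -(size_rcons q i) take_size -rcons_cat.
by rewrite -cats1 takel_cat //; apply: scope_q.
Qed.

Lemma in_betaE t v w : in_beta t v w <-> in_scope t v w /\ children_below t w (eta t v).
Proof.
split=> [[sw maximal] | [sw below_w]].
  split=> // i int_i; rewrite ltnNge; apply/negP => le_i.
  by apply: (maximal i); apply/in_scope_rcons.
split=> // i /in_scope_rcons -/(_ sw) [int_i le_i].
by have := below_w i int_i; rewrite ltnNge le_i.
Qed.

End DerivationTrees.

Section ControlledDescents.
Variables (N T F : finType) (G : igrammar N T F) (D : @dtree N T F) (H : seq (seq nat)).
Hypotheses (HD : derivation_tree G D) (Hdesc : descent D H) (Hctl : controlled H).

Local Notation v := (vH H).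
Local Notation m := (mH H).
Local Notation e k := (eta D (vH H k)).
Local Notation br M k := `[< branch_node D M (vH H k) >].
Local Notation matchedH := (matched m (fun k => e k) (fun j => children_below D (v j))).

Lemma vH_rcons k : k < m -> exists i, v k.+1 = rcons (v k) i.
Proof. by move=> km; case: (Hctl (i := k.+1)) => [|i ->]; [lia | exists i]. Qed.

Lemma vH_internal k : k <= m -> is_internal D (v k).
Proof. by case: Hdesc => _ + _ _; apply. Qed.

Lemma vH_cat i d : i + d <= m -> exists q,
  [/\ v (i + d) = v i ++ q, size q = d & forall k, k <= d -> v i ++ take k q = v (i + k)].
Proof.
elim: d => [|d IH] idm.
  by exists [::]; rewrite addn0 cats0; split=> // k; rewrite leqn0 => /eqP ->; rewrite addn0.
have [|q [vq sq take_q]] := IH; first lia.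
have [|x vx] := vH_rcons (k := i + d); first lia.
exists (rcons q x); rewrite addnS vx vq rcons_cat size_rcons sq; split=> // k.
rewrite leq_eqVlt ltnS => /orP[/eqP -> | kd]; last by rewrite -cats1 takel_cat ?sq // take_q.
by rewrite -{1}sq -(size_rcons q x) take_size addnS vx vq rcons_cat.
Qed.

Lemma in_scope_vH i j : i <= j <= m ->
  in_scope D (v i) (v j) <-> forall k, i <= k <= j -> e i <= e k.
Proof.
move=> /andP[ij jm]; have [|q [vq sq take_q]] := vH_cat (i := i) (d := j - i); first lia.
rewrite subnKC // in vq; split.
  case=> q' [vq' scope_q'] k /andP[ik kj].
  have eq_q : q' = q by rewrite -(drop_size_cat q' (erefl (size (v i)))) -vq' vq drop_size_cat.
  subst q'.
  have [|_] := scope_q' (k - i); first lia.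
  by rewrite take_q ?subnKC //; lia.
move=> ge_i; exists q; split=> // k; rewrite sq => kji; rewrite take_q //.
by split; [apply: vH_internal | apply: ge_i]; lia.
Qed.

Lemma in_beta_vH i j : i <= j <= m -> in_beta D (v i) (v j) <-> matchedH i j.
Proof.
move=> ijm; rewrite in_betaE in_scope_vH //; have /andP[ij jm] := ijm.
by split=> [[ge_i bj] | [_ _ ge_i bj]].
Qed.

Lemma vH_children k : k < m ->
  (forall i, is_internal D (rcons (v k) i) -> eta D (rcons (v k) i) = e k.+1) /\
  (e k.+1 <= e k \/ (e k.+1 = (e k).+1 /\ forall M, ~ branch_node D M (v k))).
Proof.
move=> km; have [|A [x [ch vk]]] := vH_internal (k := k); first lia.
have [h [eta_h sizes]] := children_eta HD vk.
have [i vi] := vH_rcons km.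
have h_succ : e k.+1 = h by rewrite vi eta_h // -vi; apply: vH_internal.
rewrite h_succ /eta vk; split=> //; case: sizes => [|[-> one_child]]; [by left | right].
by split=> // M /branch_node_size/(_ vk); rewrite one_child.
Qed.

Lemma eta_vH_succ k : k < m -> e k.+1 <= (e k).+1.
Proof. by case/vH_children => _ [|[-> _]]; lia. Qed.

Lemma push_vH_no_branch M k : k < m -> e k.+1 = (e k).+1 -> ~~ br M k.
Proof.
case/vH_children => _ [|[_ no_br]]; first lia.
by move=> _; apply/negP => /asboolP/no_br.
Qed.

Lemma below_vH_succ j b : j < m -> children_below D (v j) b <-> e j.+1 < b.
Proof.
move=> jm; have [same_eta _] := vH_children jm; have [i vi] := vH_rcons jm.
have int_i : is_internal D (rcons (v j) i) by rewrite -vi; apply: vH_internal.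
split=> [below_j | lt x int_x]; last by rewrite same_eta.
by rewrite -(same_eta i int_i); apply: below_j.
Qed.

Lemma split_at_vH M i : i < m -> split_at D M H i <-> branch_node D M (v i).
Proof.
move=> im; have [x vx] := vH_rcons im; rewrite /split_at vx; split.
  case=> q [vq [k [kq br_k]]]; move: vq; rewrite -cats1 => /(congr1 (drop (size (v i)))).
  rewrite !drop_size_cat // => q1; subst q; move: kq br_k; rewrite ltnS leqn0 => /eqP ->.
  by rewrite cats0.
by move=> br_i; exists [:: x]; split; [rewrite cats1 | exists 0; rewrite cats0].
Qed.

Lemma nsplits_vH M : nsplits D M H = splits (fun k => br M k) 0 m.
Proof.
rewrite /nsplits /splits subn0; apply: eq_in_count => i; rewrite mem_iota add0n => im.
exact/asbool_equiv_eq/split_at_vH.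
Qed.

Lemma limited_vH M : limited G D M H -> forall b1 t1 t2 b2, b1 < t1 -> t1 < t2 -> t2 <= b2 ->
  matchedH b1 b2 -> matchedH t1 t2 ->
  trip (fun k => sigma G D (v k)) (fun k => tau G D M (v k)) b1 b2 =
  trip (fun k => sigma G D (v k)) (fun k => tau G D M (v k)) t1 t2 ->
  forall i, (b1 <= i < t1) || (t2 <= i < b2) -> ~~ br M i.
Proof.
move=> lim b1 t1 t2 b2 bt1 t12 t2b mb mt same i irange.
have [[_ b2m _ _] [_ t2m _ _]] := (mb, mt).
have beta_b : in_beta D (v b1) (v b2) by apply/in_beta_vH => //; case: mb; lia.
have beta_t : in_beta D (v t1) (v t2) by apply/in_beta_vH => //; case: mt; lia.
have im : i < m by case/orP: irange; lia.
apply/negP => /asboolP /(split_at_vH M im).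
apply: (lim _ _ _ _ bt1 t12 t2b b2m _ _ beta_b beta_t _ _ irange).
- exact (congr1 (fun w => w.1.1) same).
- exact (esym (congr1 (fun w => w.1.2) same)).
- exact (congr1 snd same).
Qed.

Lemma respects_vH M W : respects G D M H W -> forall i j, i < j -> matchedH i j ->
  trip (fun k => sigma G D (v k)) (fun k => tau G D M (v k)) i j \in W.
Proof.
move=> resp i j ij mij; have [_ jm _ _] := mij.
by apply: resp => //; apply/in_beta_vH => //; lia.
Qed.

Lemma matched_vH_root : matchedH 0 m.
Proof. by case: Hdesc => _ _ /(in_beta_vH (i := 0) (j := m) (leqnn m)). Qed.

End ControlledDescents.

Section Triples.
Variable N : finType.

Definition triple_code (tau : @triple N) : {ffun N -> 'I_3} :=
  [ffun a => inord (if a \in tau.1.1 then 0 else if a \in tau.1.2 then 1 else 2)].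

Lemma triple_codeE tau a : inR tau ->
  [/\ (a \in tau.1.1) = (val (triple_code tau a) == 0),
      (a \in tau.1.2) = (val (triple_code tau a) == 1) &
      (a \in tau.2) = (val (triple_code tau a) == 2)].
Proof.
case/and4P => /eqP/setP/(_ a) + /eqP/setP/(_ a) + /eqP/setP/(_ a) + /eqP/setP/(_ a).
rewrite ffunE !inE.
by case: (a \in tau.1.1); case: (a \in tau.1.2); case: (a \in tau.2); rewrite /= ?inordK.
Qed.

Lemma card_inR : #|[set tau : @triple N | inR tau]| <= 3 ^ #|N|.
Proof.
rewrite -[3](card_ord 3) -card_ffun; apply: (@leq_card_in _ _ triple_code).
move=> tA tB; rewrite !inE => RA RB /ffunP same.
have mem a : [/\ (a \in tA.1.1) = (a \in tB.1.1), (a \in tA.1.2) = (a \in tB.1.2) &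
                 (a \in tA.2) = (a \in tB.2)].
  by have [-> -> ->] := triple_codeE a RA; have [-> -> ->] := triple_codeE a RB; rewrite same.
move: tA tB mem {RA RB same} => [[A1 A2] A3] [[B1 B2] B3] mem.
by congr (_, _, _); apply/setP => a; case: (mem a).
Qed.

Lemma card_inR_pairs : #|[set p : N * @triple N | inR p.2]| <= #|N| * 3 ^ #|N|.
Proof.
have -> : [set p : N * @triple N | inR p.2] = setX setT [set tau | inR tau].
  by apply/setP => -[a tau]; rewrite !inE.
by rewrite cardsX cardsT leq_mul2l card_inR orbT.
Qed.

End Triples.

Theorem lemma4 (N T F : finType) (G : igrammar N T F) (D : @dtree N T F)
    (M : nat -> Prop) (W : {set N * N * triple}) (H : seq (seq nat)) :
  grounded G ->
  derivation_tree G D ->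
  (forall k, M k -> k < ylen D) ->
  (forall w, w \in W -> inR w.2) ->
  descent D H -> controlled H -> limited G D M H -> respects G D M H W ->
  nsplits D M H <= (#|N| * 3 ^ #|N|) ^ (#|W| + 1).
Proof.
move=> _ HD _ HW Hdesc Hctl Hlim Hresp.
have K_gt1 : 1 < #|N| * 3 ^ #|N|.
  have N_pos : 0 < #|N| by apply/card_gt0P; exists (start G).
  by have := leq_pexp2l (isT : 0 < 3) N_pos; rewrite expn1; nia.
rewrite (nsplits_vH D Hctl M).
apply: (splits_limited_bound (eta_vH_succ HD Hdesc Hctl) (push_vH_no_branch HD Hdesc Hctl M)
  (fun j => children_below_mono (t := D) (p := vH H j)) (below_vH_succ HD Hdesc Hctl)
  (limited_vH Hdesc Hctl Hlim) (respects_vH Hdesc Hctl Hresp)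
  (A := [set p : N * triple | inR p.2]) _ (card_inR_pairs N) K_gt1 (matched_vH_root Hdesc Hctl)).
by move=> w /HW; rewrite inE.
Qed.
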